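(* Let $N,k\ge 10$. Let $Z$ be a finite collection of $Nk$-grid unions such that the sets $D+[-10k,10k]^d$, $D\in Z$, are pairwise disjoint and all contained in a larger $Nk$-grid union $C$. Then $C\setminus\bigcup_{D\in Z}D$ can be tiled by almost $k$-boxes.
   Context: A set $B\subseteq\mathbb{Z}^d$ is an $M$-grid union if there exist $C\subseteq M\mathbb{Z}^d$ and $\gamma\in\mathbb{Z}^d$ with $B=\gamma+C+[1,M]^d$ and both $B$ and $\mathbb{Z}^d\setminus B$ connected (in the graph with edges $\{\alpha,\alpha\pm\epsilon^i\}$). A box is a product of integer intervals; an almost $k$-box is a box all of whose side lengths lie between $k$ and $2k$ and at most one of whose side lengths differs from $k$. Tiling means partitioning into translates of such boxes. *)

From mathcomp Require Import all_boot all_order all_algebra.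
Set Implicit Arguments. Unset Strict Implicit. Unset Printing Implicit Defensive.
Import Order.TTheory GRing.Theory Num.Theory.
Local Open Scope ring_scope.

Definition pt (d : nat) := 'I_d -> int.
Definition zset (d : nat) := pt d -> Prop.

Definition adj d (x y : pt d) : Prop :=
  exists i : 'I_d, `|x i - y i| = 1 /\ forall j : 'I_d, j != i -> x j = y j.

Inductive reach d (S : zset d) (x : pt d) : pt d -> Prop :=
| reach_refl : S x -> reach S x x
| reach_step y z : reach S x y -> S z -> adj y z -> reach S x z.

Definition connected_set d (S : zset d) : Prop :=
  forall x y, S x -> S y -> reach S x y.

Definition setCz d (S : zset d) : zset d := fun x => ~ S x.

Definition grid_union d (M : nat) (B : zset d) : Prop :=
  (exists (C : zset d) (gamma : pt d),
      (forall c, C c -> forall i, (M%:Z %| c i)%Z) /\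
      (forall x, B x <-> exists c, C c /\
                   forall i, 1 <= x i - gamma i - c i <= M%:Z))
  /\ connected_set B /\ connected_set (setCz B).

Definition box d (a : pt d) (l : 'I_d -> nat) : zset d :=
  fun x => forall i, a i <= x i < a i + (l i)%:Z.

Definition almost_box_sides d (k : nat) (l : 'I_d -> nat) : Prop :=
  (forall i, (k <= l i <= 2 * k)%N) /\
  (forall i j, l i <> k -> l j <> k -> i = j).

Definition tileable_almost_kboxes d (k : nat) (S : zset d) : Prop :=
  exists (I : Type) (a : I -> pt d) (l : I -> 'I_d -> nat),
    (forall t, almost_box_sides k (l t)) /\
    (forall t x, box (a t) (l t) x -> S x) /\
    (forall x, S x -> exists t, box (a t) (l t) x) /\
    (forall t u x, box (a t) (l t) x -> box (a u) (l u) x -> t = u).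

Definition thicken d (D : zset d) (r : nat) : zset d :=
  fun x => exists y, D y /\ forall i, `|x i - y i| <= r%:Z.

(* Grow
   every cube of D_j, one coordinate at a time, by margins of lengths in [k, 2k)
   below and above, chosen so that the new faces lie on the k-grid of C; the grown
   set stays inside the 10k-neighbourhood of D_j. Then C minus the fully grown sets
   is a union of k-cubes of the k-grid of C, and the shell added to D_j in
   coordinate i is a union of boxes that follow the k-grid of C in the coordinates
   below i, the k-grid of D_j in those above i, and span one margin in coordinate i.
   Each region involved is a union of translates of a box whose faces lie on a fixed
   set of cut points in every coordinate, so a product of gaps between consecutive
   cut points lies either inside or outside it; these products are the tiles. *)

From mathcomp Require Import all_boot all_order all_algebra zify.
From Stdlib Require Import Classical FunctionalExtensionality ProofIrrelevance.
Set Implicit Arguments. Unset Strict Implicit. Unset Printing Implicit Defensive.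
Import Order.TTheory GRing.Theory Num.Theory.
Local Open Scope ring_scope.

Lemma dvdz_small (M : nat) (x : int) : (M%:Z %| x)%Z -> `|x| < M%:Z -> x = 0.
Proof.
rewrite dvdzE /= => dvx ltx; apply/eqP; rewrite -absz_eq0.
apply: contraTT ltx => nz; have := dvdn_leq _ dvx; rewrite lt0n nz; lia.
Qed.

Lemma dvdz_modB (L u : int) : (L %| (u %% L)%Z - u)%Z.
Proof. by rewrite -eqz_mod_dvd; apply/eqP/modz_mod. Qed.

Definition cell (P : int -> Prop) (s : int) (l : nat) : Prop :=
  [/\ P s, P (s + l%:Z) & forall t, s < t < s + l%:Z -> ~ P t].

Lemma cell_uniq P s l s' l' y : cell P s l -> cell P s' l' ->
  s <= y < s + l%:Z -> s' <= y < s' + l'%:Z -> s = s' /\ l = l'.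
Proof.
case=> Ps Pe Pin [Ps' Pe' Pin'] hy hy'.
have ss' : s = s'.
  by case: (ltrgtP s s') => // [lt|gt]; [case: (Pin s') | case: (Pin' s)] => //; lia.
subst s'; split=> //.
by case: (ltngtP l l') => // [lt|gt];
  [case: (Pin' (s + l%:Z)) | case: (Pin (s + l'%:Z))] => //; lia.
Qed.

Lemma cell_respects P s l a b y z : cell P s l -> P a -> P b ->
  s <= y < s + l%:Z -> s <= z < s + l%:Z -> a <= y < b -> a <= z < b.
Proof.
case=> _ _ Pin Pa Pb.
have na : ~ (s < a < s + l%:Z) by move/Pin.
have nb : ~ (s < b < s + l%:Z) by move/Pin.
lia.
Qed.

Definition congr_cut (L : nat) (u t : int) : Prop := (L%:Z %| t - u)%Z.

Lemma congr_cell L u s : (L%:Z %| s - u)%Z -> cell (congr_cut L u) s L.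
Proof.
move=> dvs; split=> [//||t lt dvt].
  by rewrite /congr_cut addrAC rpredD ?dvdzz.
have := dvdz_small (rpredB dvt dvs); lia.
Qed.

Lemma congr_cover L u y : (0 < L)%N ->
  exists s, cell (congr_cut L u) s L /\ s <= y < s + L%:Z.
Proof.
move=> L_gt0; exists (y - ((y - u) %% L%:Z)%Z); split; last lia.
apply: congr_cell; rewrite (_ : _ - u = - (((y - u) %% L%:Z)%Z - (y - u))); last lia.
by rewrite rpredN dvdz_modB.
Qed.

(* The faces of the grown cubes [o - a, o + M + b) and of the original cubes
   [o, o + M) of a grid of period [M]. *)
Definition slab_cut (M : nat) (o : int) (a b : nat) (t : int) : Prop :=
  [\/ (M%:Z %| t - (o - a%:Z))%Z, (M%:Z %| t - o)%Z | (M%:Z %| t - (o + b%:Z))%Z].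

Lemma slab_cell_left M o a b e : (a + b < M)%N -> (M%:Z %| e)%Z ->
  cell (slab_cut M o a b) (o + e - a%:Z) a.
Proof.
move=> ab dve; split.
- by apply: Or31; rewrite (_ : _ - _ = e) //; lia.
- by apply: Or32; rewrite (_ : _ - _ = e) //; lia.
- by move=> t lt [] dvt; have := dvdz_small (rpredB dvt dve); lia.
Qed.

Lemma slab_cell_right M o a b e : (a + b < M)%N -> (M%:Z %| e)%Z ->
  cell (slab_cut M o a b) (o + e) b.
Proof.
move=> ab dve; split.
- by apply: Or32; rewrite (_ : _ - _ = e) //; lia.
- by apply: Or33; rewrite (_ : _ - _ = e) //; lia.
- by move=> t lt [] dvt; have := dvdz_small (rpredB dvt dve); lia.
Qed.

Lemma slab_cover M o a b e x : (a + b < M)%N -> (M%:Z %| e)%Z ->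
  o + e - a%:Z <= x < o + e + M%:Z + b%:Z -> ~ (o + e <= x < o + e + M%:Z) ->
  exists s l, [/\ cell (slab_cut M o a b) s l, s <= x < s + l%:Z & (l = a \/ l = b)].
Proof.
move=> ab dve hx nx; case: (ltrP x (o + e)) => lt.
  by exists (o + e - a%:Z), a; split; [apply: slab_cell_left | lia | left].
exists (o + (e + M%:Z)), b; split; last by right.
- by apply: slab_cell_right; rewrite ?rpredD ?dvdzz.
- lia.
Qed.

Definition translates d (T : zset d) (lo hi : pt d) : zset d :=
  fun x => exists c, T c /\ forall m, lo m + c m <= x m < hi m + c m.

Definition cellbox d (P : 'I_d -> int -> Prop) (s : pt d) (l : 'I_d -> nat) : Prop :=
  forall m, cell (P m) (s m) (l m).

Lemma translates_cellbox d (P : 'I_d -> int -> Prop) T lo hi s l y z :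
  (forall c m, T c -> P m (lo m + c m) /\ P m (hi m + c m)) ->
  cellbox P s l -> box s l y -> box s l z ->
  translates T lo hi y -> translates T lo hi z.
Proof.
move=> cuts cb hy hz [c [Tc yc]]; exists c; split=> // m.
by have [Plo Phi] := cuts c m Tc; apply: cell_respects (cb m) Plo Phi (hy m) (hz m) (yc m).
Qed.

Lemma cellbox_choice d (P : 'I_d -> int -> Prop) (Q : 'I_d -> nat -> Prop) (y : pt d) :
  (forall m, exists s l, [/\ cell (P m) s l, s <= y m < s + l%:Z & Q m l]) ->
  exists s l, [/\ cellbox P s l, box s l y & forall m, Q m (l m)].
Proof.
move=> /fin_all_exists[s /fin_all_exists[l H]].
by exists s, l; split=> m; case: (H m).
Qed.

Lemma almost_box_sides_cube d k (l : 'I_d -> nat) :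
  (forall m, l m = k) -> almost_box_sides k l.
Proof. by move=> lk; split=> [m | m m' ]; rewrite !lk //; lia. Qed.

Lemma almost_box_sides_one d k (i : 'I_d) (l : 'I_d -> nat) :
  (forall m, m != i -> l m = k) -> (k <= l i <= 2 * k)%N -> almost_box_sides k l.
Proof.
move=> lk li; split=> [m | m m' lm lm'].
  by case: (eqVneq m i) => [-> // | /lk ->]; lia.
by case: (eqVneq m i) (eqVneq m' i) => [-> | /lk //] [-> | /lk].
Qed.

Lemma tileable_of_pieces d k (S : zset d) (Piece : Type) (piece : Piece -> zset d)
    (cut : Piece -> 'I_d -> int -> Prop) :
  (forall p x, piece p x -> S x) ->
  (forall x, S x -> exists p, piece p x) ->
  (forall p p' x, piece p x -> piece p' x -> p = p') ->
  (forall p s l y z, cellbox (cut p) s l -> box s l y -> box s l z -> piece p y -> piece p z) ->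
  (forall p y, piece p y ->
     exists s l, [/\ almost_box_sides k l, cellbox (cut p) s l & box s l y]) ->
  tileable_almost_kboxes k S.
Proof.
move=> sub cover disj const cells.
pose tile (t : Piece * pt d * ('I_d -> nat)) := let: (p, s, l) := t in
  [/\ almost_box_sides k l, cellbox (cut p) s l & exists y, box s l y /\ piece p y].
have in_piece t x : tile t -> box t.1.2 t.2 x -> piece t.1.1 x.
  by case: t => [[p s] l] [_ cb [y [hy py]]] hx; apply: const cb hy hx py.
exists {t | tile t}, (fun t => (sval t).1.2), (fun t => (sval t).2).
split; [| split; [| split]].
- by case=> [[[p s] l] []].
- by move=> [t tt] x /(in_piece t x tt) /sub.
- move=> x /cover[p px]; have [s [l [al cb hx]]] := cells p x px.
  by exists (exist _ (p, s, l) (And3 al cb (ex_intro _ x (conj hx px)))).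
move=> [[[p s] l] tt] [[[p' s'] l'] tt'] x /= hx hx'.
have /= pp' := disj _ _ _ (in_piece _ _ tt hx) (in_piece _ _ tt' hx'); subst p'.
have eq m : s m = s' m /\ l m = l' m.
  by case: tt tt' => [_ cb _] [_ cb' _]; apply: cell_uniq (cb m) (cb' m) (hx m) (hx' m).
have es : s = s' by apply: functional_extensionality => m; case: (eq m).
have el : l = l' by apply: functional_extensionality => m; case: (eq m).
subst s' l'; congr exist; apply: proof_irrelevance.
Qed.

Definition grid_rep d (M : nat) (B T : zset d) (g : pt d) : Prop :=
  (forall c, T c -> forall m, (M%:Z %| c m)%Z) /\
  (forall x, B x <-> translates T (fun m => g m + 1) (fun m => g m + M%:Z + 1) x).

Lemma grid_union_rep d M (B : zset d) : grid_union M B -> exists T g, grid_rep M B T g.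
Proof.
case=> [[T [g [dvT HB]]] _]; exists T, g; split=> // x.
rewrite HB; split=> -[c [Tc xc]]; exists c; split=> // m; have := xc m; lia.
Qed.

Lemma thicken_refl d (B : zset d) r x : B x -> thicken B r x.
Proof. by exists x; split=> // m; rewrite subrr normr0. Qed.

Lemma switch_point (P : nat -> Prop) n : ~ P 0%N -> P n -> exists2 i, (i < n)%N & ~ P i /\ P i.+1.
Proof.
move=> P0; elim: n => [// | n IH] Pn.
case: (classic (P n)) => [/IH[i lt_in Pi] | nPn]; last by exists n.
by exists i => //; apply: ltnW.
Qed.

Section ComplementTiling.
Variables (d n k M : nat).
Hypotheses (k_gt0 : (0 < k)%N) (k_dvd_M : (k %| M)%N) (M_ge : (4 * k <= M)%N).
Variables (D : 'I_n -> zset d) (Ds : 'I_n -> zset d) (g : 'I_n -> pt d).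
Variables (C Cs : zset d) (h : pt d).
Hypotheses (D_rep : forall j, grid_rep M (D j) (Ds j) (g j)) (C_rep : grid_rep M C Cs h).
Hypothesis thicken_disj : forall j j' x, j != j' ->
  thicken (D j) (10 * k) x -> thicken (D j') (10 * k) x -> False.
Hypothesis thicken_sub : forall j x, thicken (D j) (10 * k) x -> C x.

Lemma dvdz_k_of_M x : (M%:Z %| x)%Z -> (k%:Z %| x)%Z.
Proof. exact: dvdz_trans. Qed.

Definition pad (u : int) : nat := (k + `|(u %% k%:Z)%Z|%N)%N.

Lemma pad_bounds u : (k <= pad u < 2 * k)%N.
Proof. rewrite /pad; lia. Qed.

Lemma pad_congr u : (k%:Z %| (pad u)%:Z - u)%Z.
Proof.
rewrite (_ : _ - u = k%:Z + ((u %% k%:Z)%Z - u)); last by rewrite /pad; lia.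
by rewrite rpredD ?dvdzz ?dvdz_modB.
Qed.

(* Margins below and above the cubes of [D j] in coordinate [m]; they put the grown
   faces on the k-grid of [C], which passes through [h m + 1]. *)
Definition lpad j m := pad (g j m - h m).
Definition rpad j m := pad (h m - g j m).

Definition ext_lo j (i : nat) m := g j m + 1 - (if (m < i)%N then lpad j m else 0%N)%:Z.
Definition ext_hi j (i : nat) m := g j m + M%:Z + 1 + (if (m < i)%N then rpad j m else 0%N)%:Z.
Definition ext j i := translates (Ds j) (ext_lo j i) (ext_hi j i).

Lemma ext0 j x : ext j 0 x <-> D j x.
Proof.
rewrite (D_rep j).2 /ext /ext_lo /ext_hi.
by split=> -[c [Dc xc]]; exists c; split=> // m; have := xc m; rewrite ltn0; lia.
Qed.

Lemma ext_mono j i i' x : (i <= i')%N -> ext j i x -> ext j i' x.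
Proof.
move=> le_ii' [c [Dc xc]]; exists c; split=> // m; have := xc m.
rewrite /ext_lo /ext_hi; do 2 case: ifP => ?; lia.
Qed.

Lemma ext_thicken j i x : ext j i x -> thicken (D j) (10 * k) x.
Proof.
move=> [c [Dc xc]].
exists (fun m => Num.max (g j m + c m + 1) (Num.min (x m) (g j m + c m + M%:Z))); split.
  by apply/(D_rep j).2; exists c; split=> // m; lia.
move=> m; have := xc m; have := pad_bounds (g j m - h m); have := pad_bounds (h m - g j m).
rewrite /ext_lo /ext_hi /lpad /rpad; case: ifP => _; lia.
Qed.

Definition core x := C x /\ forall j, ~ ext j d x.
Definition layer j (i : 'I_d) x := ext j i.+1 x /\ ~ ext j i x.
Definition piece (p : option ('I_n * 'I_d)) : zset d :=
  if p is Some (j, i) then layer j i else core.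

Lemma piece_sub p x : piece p x -> C x /\ forall j, ~ D j x.
Proof.
case: p => [[j i] [ext_x next_x] | [Cx next_x]]; last first.
  by split=> // j /ext0 /(ext_mono (leq0n d)) /next_x.
split; first exact: thicken_sub (ext_thicken ext_x).
move=> j' Dx; case: (eqVneq j j') Dx => [<- | ne] Dx.
  by apply: next_x; apply: ext_mono (leq0n i) _; apply/ext0.
exact: thicken_disj ne (ext_thicken ext_x) (thicken_refl _ Dx).
Qed.

Lemma piece_cover x : C x /\ (forall j, ~ D j x) -> exists p, piece p x.
Proof.
move=> [Cx nDx]; case: (classic (exists j, ext j d x)) => [[j ext_x] | next_x].
  have nx0 : ~ ext j 0 x by move/ext0; apply: nDx.
  have [i lt_id [nx x1]] := switch_point (P := fun i => ext j i x) nx0 ext_x.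
  by exists (Some (j, Ordinal lt_id)).
by exists None; split=> // j ext_x; apply: next_x; exists j.
Qed.

Lemma piece_uniq p p' x : piece p x -> piece p' x -> p = p'.
Proof.
have layer_ext j (i : 'I_d) : layer j i x -> ext j d x.
  by case=> ext_x _; apply: ext_mono ext_x.
case: p p' => [[j i]|] [[j' i']|] //=.
- move=> [x1 nx] [x1' nx'].
  have jj' : j = j'.
    by case: (eqVneq j j') => // ne; case: (thicken_disj ne (ext_thicken x1) (ext_thicken x1')).
  subst j'; congr (Some (j, _)); apply: val_inj.
  by case: (ltngtP i i') => // [lt | gt];
    [case: nx'; apply: ext_mono x1 | case: nx; apply: ext_mono x1'].
- by move=> /layer_ext ext_x [_ /(_ j)].
- by move=> [_ /(_ j')] nx /layer_ext.
Qed.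

Definition piece_cut (p : option ('I_n * 'I_d)) (m : 'I_d) : int -> Prop :=
  if p is Some (j, i) then
    if (m < i)%N then congr_cut k (h m + 1)
    else if m == i then slab_cut M (g j m + 1) (lpad j m) (rpad j m)
    else congr_cut k (g j m + 1)
  else congr_cut k (h m + 1).

Lemma C_cuts c m : Cs c ->
  congr_cut k (h m + 1) (h m + 1 + c m) /\ congr_cut k (h m + 1) (h m + M%:Z + 1 + c m).
Proof.
move=> /C_rep.1 /(_ m) dvc; rewrite /congr_cut; split.
  by rewrite (_ : _ - _ = c m) ?dvdz_k_of_M //; lia.
by rewrite (_ : _ - _ = M%:Z + c m) ?dvdz_k_of_M ?rpredD ?dvdzz //; lia.
Qed.

Lemma ext_cuts_h j (i : nat) c (m : 'I_d) : Ds j c -> (m < i)%N ->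
  congr_cut k (h m + 1) (ext_lo j i m + c m) /\ congr_cut k (h m + 1) (ext_hi j i m + c m).
Proof.
move=> /(D_rep j).1 /(_ m) dvc lt_mi; rewrite /congr_cut /ext_lo /ext_hi lt_mi; split.
  rewrite (_ : _ - _ = c m - ((lpad j m)%:Z - (g j m - h m))); last lia.
  by apply: rpredB; [apply: dvdz_k_of_M | apply: pad_congr].
rewrite (_ : _ - _ = M%:Z + c m + ((rpad j m)%:Z - (h m - g j m))); last lia.
by apply: rpredD; [rewrite dvdz_k_of_M ?rpredD ?dvdzz | apply: pad_congr].
Qed.

Lemma ext_cuts_g j (i : nat) c (m : 'I_d) : Ds j c -> (i <= m)%N ->
  congr_cut k (g j m + 1) (ext_lo j i m + c m) /\ congr_cut k (g j m + 1) (ext_hi j i m + c m).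
Proof.
move=> /(D_rep j).1 /(_ m) dvc le_im.
rewrite /congr_cut /ext_lo /ext_hi ltnNge le_im /=; split.
  by rewrite (_ : _ - _ = c m) ?dvdz_k_of_M //; lia.
by rewrite (_ : _ - _ = M%:Z + c m) ?dvdz_k_of_M ?rpredD ?dvdzz //; lia.
Qed.

Lemma ext_cuts_slab j (i : nat) c (m : 'I_d) : Ds j c ->
  slab_cut M (g j m + 1) (lpad j m) (rpad j m) (ext_lo j i m + c m) /\
  slab_cut M (g j m + 1) (lpad j m) (rpad j m) (ext_hi j i m + c m).
Proof.
move=> /(D_rep j).1 /(_ m) dvc; have dvMc : (M%:Z %| M%:Z + c m)%Z by rewrite rpredD ?dvdzz.
rewrite /ext_lo /ext_hi; case: ifP => _; split.
- by apply: Or31; rewrite (_ : _ - _ = c m) //; lia.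
- by apply: Or33; rewrite (_ : _ - _ = M%:Z + c m) //; lia.
- by apply: Or32; rewrite (_ : _ - _ = c m) //; lia.
- by apply: Or32; rewrite (_ : _ - _ = M%:Z + c m) //; lia.
Qed.

Lemma ext_bounds_succ j (i m : 'I_d) : m != i ->
  ext_lo j i.+1 m = ext_lo j i m /\ ext_hi j i.+1 m = ext_hi j i m.
Proof. by move=> ne; rewrite /ext_lo /ext_hi ltnS leq_eqVlt val_eqE (negbTE ne). Qed.

Lemma piece_cellbox p s l y z : cellbox (piece_cut p) s l -> box s l y -> box s l z ->
  piece p y -> piece p z.
Proof.
move=> cb hy hz.
have const T lo hi :
    (forall c m, T c -> piece_cut p m (lo m + c m) /\ piece_cut p m (hi m + c m)) ->
    translates T lo hi y <-> translates T lo hi z.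
  by move=> cuts; split; apply: translates_cellbox cuts cb _ _.
case: p cb const => [[j i]|] cb const /=.
  have ext_const i' : (i <= i' <= i.+1)%N -> ext j i' y <-> ext j i' z.
    move=> /andP[le_ii' le_i'i]; apply: const => c m Dc /=.
    case: ifP => [lt_mi | /negbT]; first exact: ext_cuts_h Dc (leq_trans lt_mi le_ii').
    case: (eqVneq m i) => [-> _ | ne]; first exact: ext_cuts_slab.
    by rewrite -leqNgt => le_im; apply: ext_cuts_g Dc _; move: ne; rewrite -val_eqE /=; lia.
  have e1 : ext j i.+1 y <-> ext j i.+1 z by apply: ext_const; rewrite leqnSn leqnn.
  have e0 : ext j i y <-> ext j i z by apply: ext_const; rewrite leqnn leqnSn.
  by move=> [x1 nx]; split; [apply/e1 | move/e0].
have C_const : C y <-> C z.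
  have tr := const Cs _ _ (fun c m => @C_cuts c m).
  by split=> /C_rep.2 /tr /C_rep.2.
have ext_const j : ext j d y <-> ext j d z.
  by apply: const => c m Dc; apply: ext_cuts_h Dc (ltn_ord m).
by move=> [Cy ny]; split=> [|j /ext_const]; [apply/C_const | apply: ny].
Qed.

Lemma grid_cell_at u (x : int) :
  exists s l, [/\ cell (congr_cut k u) s l, s <= x < s + l%:Z & l == k].
Proof. by have [s [cs hs]] := congr_cover u x k_gt0; exists s, k. Qed.

Lemma layer_slab j (i : 'I_d) y : layer j i y ->
  exists s l, [/\ cell (slab_cut M (g j i + 1) (lpad j i) (rpad j i)) s l,
                  s <= y i < s + l%:Z & (k <= l <= 2 * k)%N].
Proof.
move=> [[c [Dc yc]] ny].
have [a_bd b_bd] := (pad_bounds (g j i - h i), pad_bounds (h i - g j i)).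
have ab : (lpad j i + rpad j i < M)%N by rewrite /lpad /rpad; lia.
have yi := yc i; rewrite /ext_lo /ext_hi ltnSn in yi.
have mid : ~ (g j i + 1 + c i <= y i < g j i + 1 + c i + M%:Z).
  move=> mid; apply: ny; exists c; split=> // m.
  case: (eqVneq m i) => [-> | ne]; first by rewrite /ext_lo /ext_hi ltnn; lia.
  by have [<- <-] := ext_bounds_succ j ne; apply: yc.
have [|s [l [cs hs ab_l]]] := slab_cover ab ((D_rep j).1 c Dc i) _ mid; first lia.
by exists s, l; split=> //; case: ab_l => ->; rewrite /lpad /rpad; lia.
Qed.

Lemma piece_cellbox_exists p y : piece p y ->
  exists s l, [/\ almost_box_sides k l, cellbox (piece_cut p) s l & box s l y].
Proof.
case: p => [[j i] lay | _]; last first.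
  have [m | s [l [cb hy lk]]] :=
    cellbox_choice (P := piece_cut None) (Q := fun _ l => l == k) (y := y).
    exact: grid_cell_at.
  by exists s, l; split=> //; apply: almost_box_sides_cube => m; apply/eqP.
pose Q m l := if m == i then (k <= l <= 2 * k)%N else l == k.
have [m | s [l [cb hy Ql]]] := cellbox_choice (P := piece_cut (Some (j, i))) (Q := Q) (y := y).
  rewrite /= /Q; case: (eqVneq m i) => [-> | _]; last by case: ifP => _; apply: grid_cell_at.
  by rewrite ltnn; apply: layer_slab.
exists s, l; split=> //; apply: (almost_box_sides_one (i := i)).
  by move=> m ne; have := Ql m; rewrite /Q (negbTE ne) => /eqP.
by have := Ql i; rewrite /Q eqxx.
Qed.

Lemma complement_tileable : tileable_almost_kboxes k (fun x => C x /\ forall j, ~ D j x).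
Proof.
exact: tileable_of_pieces piece_sub piece_cover piece_uniq piece_cellbox piece_cellbox_exists.
Qed.

End ComplementTiling.

Theorem proposition6p3 (d N k n : nat) (D : 'I_n -> zset d) (C : zset d) :
  (10 <= N)%N -> (10 <= k)%N ->
  (forall j, grid_union (N * k) (D j)) ->
  grid_union (N * k) C ->
  (forall j j' x, j != j' ->
     thicken (D j) (10 * k) x -> thicken (D j') (10 * k) x -> False) ->
  (forall j x, thicken (D j) (10 * k) x -> C x) ->
  tileable_almost_kboxes k (fun x => C x /\ forall j, ~ D j x).
Proof.
move=> N_ge k_ge D_grid C_grid disj sub.
have /fin_all_exists[Ds /fin_all_exists[g D_rep]] := fun j => grid_union_rep (D_grid j).
have [Cs [h C_rep]] := grid_union_rep C_grid.
apply: complement_tileable D_rep C_rep disj sub.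
- lia.
- exact: dvdn_mull.
- by rewrite leq_mul2r; lia.
Qed.
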